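(* Let $B$ be a log-product expression of degree $n\geq 2$. Then there are homogeneous expressions $X$ and $Y$ such that $B\equiv X\cdot Y$ and $n/3 \leq \deg X \le 2n/3$ and $n/3\le \deg Y \leq 2n/3$.
   Context: Regular expressions (without star, without $\emptyset$) are built from $\epsilon$ and letters by union and concatenation; $R\equiv R'$ means they describe the same language. A homogeneous expression describes a language all of whose words have the same length, its degree $\deg R$. A homogeneous expression $B$ is log-product if it is a letter, or there are homogeneous expressions $B_1,B_2$ with $B_1$ log-product, $\deg B_1\ge\deg B_2$ and $B=B_1B_2$ or $B=B_2B_1$. *)

From mathcomp Require Import all_boot.
Set Implicit Arguments. Unset Strict Implicit. Unset Printing Implicit Defensive.

Inductive rexp (A : Type) : Type :=
| Eps : rexp A
| Let : A -> rexp A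
| Union : rexp A -> rexp A -> rexp A
| Cat : rexp A -> rexp A -> rexp A.

Arguments Eps {A}.

Fixpoint in_lang (A : Type) (R : rexp A) (w : seq A) : Prop :=
  match R with
  | Eps => w = [::]
  | Let a => w = [:: a]
  | Union R1 R2 => in_lang R1 w \/ in_lang R2 w
  | Cat R1 R2 => exists u v, w = u ++ v /\ in_lang R1 u /\ in_lang R2 v
  end.

Definition requiv (A : Type) (R R' : rexp A) : Prop :=
  forall w, in_lang R w <-> in_lang R' w.

(* R is homogeneous of degree d: every word of L(R) has length d.
   (L(R) is never empty, so d is unique.) *)
Definition hom_deg (A : Type) (R : rexp A) (d : nat) : Prop :=
  forall w, in_lang R w -> size w = d.

Inductive logprod (A : Type) : rexp A -> Prop :=
| lp_let : forall a, logprod (Let a)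
| lp_catl : forall B1 B2 d1 d2, logprod B1 -> hom_deg B1 d1 -> hom_deg B2 d2 ->
    d2 <= d1 -> logprod (Cat B1 B2)
| lp_catr : forall B1 B2 d1 d2, logprod B1 -> hom_deg B1 d1 -> hom_deg B2 d2 ->
    d2 <= d1 -> logprod (Cat B2 B1).

(* Walk down the log-product tree, keeping a factor whose window of positions
   strictly contains the target interval [n/3, 2n/3], and cut it between its
   two factors.  The log-product factor is the longer one, so the cut lies on
   the short factor's side of the window's midpoint.  A window inside [0, n]
   containing [n/3, 2n/3] has its midpoint in [n/3, 2n/3]; hence either the
   cut is a balanced split, or it misses the target on the short side and we
   descend into the log-product factor. *)

From mathcomp Require Import all_boot.
From mathcomp Require Import zify.

Section LogProductSplit.
Variable A : Type.
Implicit Types (R X Y Z : rexp A).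

Lemma in_lang_nonempty R : exists w, in_lang R w.
Proof.
elim: R => [|a|R1 [u Hu] R2 _|R1 [u Hu] R2 [v Hv]] /=.
- by exists [::].
- by exists [:: a].
- by exists u; left.
- by exists (u ++ v), u, v.
Qed.

Lemma hom_deg_uniq {R d d'} : hom_deg R d -> hom_deg R d' -> d = d'.
Proof.
move=> Hd Hd'; have [w Hw] := in_lang_nonempty R.
by rewrite -(Hd _ Hw) -(Hd' _ Hw).
Qed.

Lemma hom_deg_cat {X Y dX dY} :
  hom_deg X dX -> hom_deg Y dY -> hom_deg (Cat X Y) (dX + dY).
Proof.
move=> HX HY w [u [v [-> [Hu Hv]]]].
by rewrite size_cat (HX _ Hu) (HY _ Hv).
Qed.

Lemma requiv_sym {X Y} : requiv X Y -> requiv Y X.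
Proof. by move=> H w; rewrite H. Qed.

Lemma requiv_trans {X Y Z} : requiv X Y -> requiv Y Z -> requiv X Z.
Proof. by move=> H1 H2 w; rewrite H1 H2. Qed.

Lemma requiv_catA X Y Z : requiv (Cat (Cat X Y) Z) (Cat X (Cat Y Z)).
Proof.
move=> w /=; split.
- move=> [_ [v [-> [[u1 [u2 [-> [H1 H2]]]] H3]]]].
  by exists u1, (u2 ++ v); rewrite catA; split=> //; split=> //; exists u2, v.
- move=> [u [_ [-> [H1 [v1 [v2 [-> [H2 H3]]]]]]]].
  by exists (u ++ v1), v2; rewrite catA; split=> //; split=> //; exists u, v1.
Qed.

Lemma requiv_catl {X X'} Y : requiv X X' -> requiv (Cat X Y) (Cat X' Y).
Proof.
by move=> H w /=; split=> -[u [v [-> [Hu Hv]]]]; exists u, v;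
  do 2 split=> //; apply/H.
Qed.

Lemma requiv_catr X {Y Y'} : requiv Y Y' -> requiv (Cat X Y) (Cat X Y').
Proof.
by move=> H w /=; split=> -[u [v [-> [Hu Hv]]]]; exists u, v;
  do 2 split=> //; apply/H.
Qed.

(* The admissible degrees of the left factor form the rational interval
   [l/k, h/k].  It lies in (0, d), contains an integer ([l, h] has k integer
   points), and contains the midpoint of every window of [0, d] containing it:
   h/k >= 2 (l/k) and 2 (h/k) >= d + l/k. *)
Lemma logprod_split {D d} k l h :
  logprod D -> hom_deg D d ->
  0 < l -> h < k * d -> l + k <= h.+1 -> 2 * l <= h -> k * d + l <= 2 * h ->
  exists X Y dX dY, [/\ hom_deg X dX, hom_deg Y dY, dX + dY = d,
                        requiv D (Cat X Y) & l <= k * dX <= h].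
Proof.
move=> LD; elim: LD d l h
  => [a|B1 B2 d1 d2 _ IH H1 H2 le21|B1 B2 d1 d2 _ IH H1 H2 le21]
     d l h HD l_gt0 h_lt lk_le l2_le dl_le.
- have Ed : d = 1 by apply: hom_deg_uniq HD _ => w ->.
  subst d; lia.
- have Ed := hom_deg_uniq HD (hom_deg_cat H1 H2); subst d.
  have [h_lt1 | le1] := ltnP h (k * d1).
  + have [X [Y [dX [dY [HX HY <- HB1 Hc]]]]] :=
      IH d1 l h H1 l_gt0 h_lt1 lk_le l2_le ltac:(lia).
    exists X, (Cat Y B2), dX, (dY + d2); split; rewrite ?addnA //.
    * exact: hom_deg_cat.
    * exact: requiv_trans (requiv_catl B2 HB1) (requiv_catA _ _ _).
  + exists B1, B2, d1, d2; split=> //; nia.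
- have Ed := hom_deg_uniq HD (hom_deg_cat H2 H1); subst d.
  have [lt2 | le2] := ltnP (k * d2) l.
  + have [X [Y [dX [dY [HX HY <- HB1 Hc]]]]] :=
      IH d1 (l - k * d2) (h - k * d2) H1 ltac:(lia) ltac:(lia) ltac:(lia) ltac:(lia)
      ltac:(lia).
    exists (Cat B2 X), Y, (d2 + dX), dY; split; rewrite ?addnA //.
    * exact: hom_deg_cat.
    * exact: requiv_trans (requiv_catr B2 HB1) (requiv_sym (requiv_catA _ _ _)).
    * lia.
  + exists B2, B1, d2, d1; split=> //; nia.
Qed.

End LogProductSplit.

Theorem proposition6p8 (A : Type) (B : rexp A) (n : nat) :
  logprod B -> hom_deg B n -> 2 <= n ->
  exists (X Y : rexp A) (dX dY : nat),
    hom_deg X dX /\ hom_deg Y dY /\ requiv B (Cat X Y) /\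
    n <= 3 * dX /\ 3 * dX <= 2 * n /\ n <= 3 * dY /\ 3 * dY <= 2 * n.
Proof.
move=> LB HB n_ge2.
have [X [Y [dX [dY [HX HY dXY HXY /andP[lo hi]]]]]] :=
  @logprod_split A B n 3 n (2 * n) LB HB
    ltac:(lia) ltac:(lia) ltac:(lia) ltac:(lia) ltac:(lia).
exists X, Y, dX, dY; do 3 (split=> //); lia.
Qed.
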